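(* Let $0<1/N_0,1/D_0,1/C_0\ll1/r\le1/3$ with $r\in\mathbb N$. Let $N\ge N_0$, $C\ge C_0$, $D\ge D_0$, and let $\mathcal H$ be an $N$-vertex linear multi-hypergraph with maximum degree $\Delta(\mathcal H)\le D$ in which every edge has size at most $r$. Then there is an $r$-uniform linear hypergraph $\mathcal H_{\mathrm{unif}}$ such that: (1) $\mathcal H\subseteq\mathcal H_{\mathrm{unif}}|_{V(\mathcal H)}$ and $\mathcal H_{\mathrm{unif}}|_{V(\mathcal H)}\setminus\mathcal H$ contains only singleton edges; (2) every $v\in V(\mathcal H_{\mathrm{unif}})$ satisfies $D-C\le d_{\mathcal H_{\mathrm{unif}}}(v)\le D$, and moreover every $v\in V(\mathcal H)$ with $d_{\mathcal H}(v)\ge D-C$ satisfies $d_{\mathcal H_{\mathrm{unif}}}(v)=d_{\mathcal H}(v)$; (3) $|V(\mathcal H_{\mathrm{unif}})|\le r(r-1)^2D^3N$.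
   Context: A multi-hypergraph has a finite vertex set and a multiset of nonempty edges. A linear multi-hypergraph is one in which any two distinct edges of size at least two intersect in at most one vertex (so only singleton edges may be repeated); a linear hypergraph has no repeated edges. Degree $d_{\mathcal H}(v)$ is the number of edges (with multiplicity) containing $v$; $r$-uniform means all edges have size $r$. For $S\subseteq V(\mathcal H')$, $\mathcal H'|_S$ is the multi-hypergraph on vertex set $S$ with edge multiset $\{e\cap S: e\in\mathcal H',\ e\cap S\ne\varnothing\}$. Hierarchy: $N_0,D_0,C_0$ sufficiently large in terms of $r$. *)

From mathcomp Require Import all_boot.
Set Implicit Arguments. Unset Strict Implicit. Unset Printing Implicit Defensive.

(* A multi-hypergraph on the finite vertex type T is given by its multiset of
   edges, represented as a list (order irrelevant, repetitions allowed). *)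
Notation mhg T := (seq {set T}) (only parsing).

Definition edges_nonempty (T : finType) (E : mhg T) : Prop :=
  forall e, e \in E -> e != set0.

Definition linear_mhg (T : finType) (E : mhg T) : Prop :=
  edges_nonempty E /\
  forall i j, i < size E -> j < size E -> i != j ->
    2 <= #|nth set0 E i| -> 2 <= #|nth set0 E j| ->
    #|nth set0 E i :&: nth set0 E j| <= 1.

Definition linear_hg (T : finType) (E : mhg T) : Prop :=
  linear_mhg E /\ uniq E.

Definition deg (T : finType) (E : mhg T) (v : T) : nat :=
  count (fun e : {set T} => v \in e) E.

Definition uniform (T : finType) (r : nat) (E : mhg T) : Prop :=
  forall e, e \in E -> #|e| = r.

(* restriction H'|_S where S is the image of the injection f : T -> U,
   expressed on vertex type T: edge multiset { e /\ S : e in H', e /\ S <> 0 } *)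
Definition restr (T U : finType) (f : T -> U) (E : mhg U) : mhg T :=
  [seq f @^-1: e | e : {set U} <- E & f @^-1: e != set0].

From mathcomp Require Import all_boot zify.
Set Implicit Arguments. Unset Strict Implicit. Unset Printing Implicit Defensive.

(* Given H on the vertices 'I_N with edges of size <= r and degrees <= D, we
   first add at each vertex v singleton edges {v} until its degree reaches
   D - C; the result Hplus is still linear, has degrees <= D, hence at most
   N * D edges.  Fresh vertices form a grid of r columns of height
   p = r * N * D.  Every edge e_j of Hplus is padded into an r-set with
   r - |e_j| fresh vertices from a private group in column 0, and the grid
   is covered by the lines {(i, b + s * i mod p) : i < r} of slopes
   s < D - 1, so that every grid point lies on exactly D - 1 lines and in at
   most one padded edge.  Two lines meet at most once because p is larger
   than every slope difference, and a padded edge meets a line only at the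
   line's point in column 0.  The file first proves the general facts
   (counting, linearity, modular lines), then the properties of the
   construction, and derives the theorem at the end. *)

Lemma count_le1 (T : eqType) (P : pred T) (s : seq T) :
  uniq s -> {in s &, forall x y, P x -> P y -> x = y} -> count P s <= 1.
Proof.
elim: s => [|a s IH] //= /andP[a_notin_s uniq_s] Puniq.
have IHs : count P s <= 1.
  by apply: IH => // x y xs ys; apply: Puniq; rewrite inE ?xs ?ys orbT.
case Pa: (P a) => //=.
rewrite (@eq_in_count _ _ pred0) ?count_pred0 // => x xs /=.
apply/negP => Px; move: a_notin_s.
by rewrite (Puniq a x) ?inE ?eqxx ?xs ?orbT.
Qed.

Lemma divmod_inj m i y i' y' :
  y < m -> y' < m -> i * m + y = i' * m + y' -> i = i' /\ y = y'.
Proof.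
move=> hy hy' e.
have quo k z : z < m -> (k * m + z) %/ m = k.
  by move=> hz; rewrite divnMDl ?divn_small ?addn0 //; lia.
have rem k z : z < m -> (k * m + z) %% m = z by move=> hz; rewrite modnMDl modn_small.
by split; [rewrite -(quo i y) // -(quo i' y') // e | rewrite -(rem i y) // -(rem i' y') // e].
Qed.

Lemma count_shift p c y :
  y < p -> count (fun b => (b + c) %% p == y) (iota 0 p) = 1.
Proof.
move=> hy; have p_gt0 : 0 < p by lia.
apply/eqP; rewrite eqn_leq; apply/andP; split.
  apply: count_le1 => [|b b']; first exact: iota_uniq.
  rewrite !mem_iota !add0n => hb hb' /eqP e /eqP e'.
  by apply/eqP; move: (eqxx y); rewrite -{1}e -e' eqn_modDr !modn_small.
rewrite -has_count; apply/hasP; exists ((y + (p - c %% p)) %% p).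
  by rewrite mem_iota ltn_pmod.
have hc := ltn_pmod c p_gt0.
by rewrite modnDml -modnDmr -addnA subnK ?(ltnW hc) // modnDr modn_small.
Qed.

Lemma mod_line_inj p s b s' b' i j :
  b < p -> b' < p -> i < j -> s * (j - i) < p -> s' * (j - i) < p ->
  (b + s * i) %% p = (b' + s' * i) %% p ->
  (b + s * j) %% p = (b' + s' * j) %% p -> s = s' /\ b = b'.
Proof.
move=> hb hb' ij hs hs' ei.
have -> : j = i + (j - i) by lia.
rewrite !mulnDr !addnA -modnDml ei modnDml => /eqP.
rewrite eqn_modDl !modn_small // eqn_mul2r => /orP[/eqP|/eqP es]; first lia.
split => //; move/eqP: ei; rewrite es eqn_modDr !modn_small //.
by move/eqP.
Qed.

(* In a linear multi-hypergraph two distinct edges share at most one vertex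
   (trivially so when one of them has size at most one). *)
Lemma linear_mhg_inter (T : finType) (E : mhg T) i j :
  linear_mhg E -> i < size E -> j < size E -> i != j ->
  #|nth set0 E i :&: nth set0 E j| <= 1.
Proof.
move=> [_ lin] hi hj ij.
case: (ltnP 1 #|nth set0 E i|) => ci; last first.
  exact: leq_trans (subset_leq_card (subsetIl _ _)) ci.
case: (ltnP 1 #|nth set0 E j|) => cj; last first.
  exact: leq_trans (subset_leq_card (subsetIr _ _)) cj.
exact: lin.
Qed.

Lemma linear_mhg_cat_singletons (T : finType) (E X : mhg T) :
  linear_mhg E -> (forall e, e \in X -> #|e| = 1) -> linear_mhg (E ++ X).
Proof.
move=> [E_ne lin] X1; split.
  by move=> e; rewrite mem_cat => /orP[/E_ne // | /X1 c]; rewrite -card_gt0 c.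
have old_edge i : i < size (E ++ X) -> 2 <= #|nth set0 (E ++ X) i| ->
    i < size E /\ nth set0 (E ++ X) i = nth set0 E i.
  rewrite size_cat nth_cat => hi; case: (ltnP i (size E)) => // hiE.
  have : i - size E < size X by lia.
  by move/(mem_nth set0)/X1 => ->.
move=> i j hi hj ij ci cj.
have [iE ei] := old_edge i hi ci; have [jE ej] := old_edge j hj cj.
by rewrite ei ej in ci cj *; apply: lin.
Qed.

(* Double counting: with nonempty edges and degrees <= D there are at most
   #|T| * D edges. *)
Lemma size_le_deg (T : finType) (E : mhg T) (D : nat) :
  edges_nonempty E -> (forall v, deg E v <= D) -> size E <= #|T| * D.
Proof.
move=> E_ne E_deg.
have handshake : \sum_(v : T) deg E v = \sum_(e <- E) #|e|.
  have degE v : deg E v = \sum_(e <- E) (v \in e : nat).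
    by rewrite /deg -sum1_count big_mkcond; apply: eq_bigr => e _; case: (v \in e).
  rewrite (eq_bigr _ (fun v _ => degE v)) exchange_big /=.
  by apply: eq_bigr => e _; rewrite -sum1_card [RHS]big_mkcond.
have : \sum_(v : T) deg E v <= #|T| * D.
  by rewrite -sum_nat_const; apply: leq_sum => v _; exact: E_deg.
rewrite handshake; apply: leq_trans.
rewrite -[size E]sum1_size big_seq_cond [X in _ <= X]big_seq_cond.
by apply: leq_sum => e /andP[eE _]; rewrite card_gt0 E_ne.
Qed.

Lemma linear_hg_map (T : finType) (I : eqType) (f : I -> {set T}) (L : seq I) r :
  1 < r -> uniq L -> {in L, forall l, #|f l| = r} ->
  {in L &, forall l l', l != l' -> #|f l :&: f l'| <= 1} ->
  linear_hg (map f L) /\ uniform r (map f L).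
Proof.
move=> r_gt1 uniq_L card_f inter_f.
have unif : uniform r (map f L) by move=> _ /mapP[l hl ->]; exact: card_f.
split=> //; split; last first.
  rewrite map_inj_in_uniq // => l l' hl hl' e.
  apply/eqP/negPn/negP => ne; have := inter_f _ _ hl hl' ne.
  by rewrite e setIid card_f //; lia.
split=> [e /unif ce | i j]; first by rewrite -card_gt0 ce; lia.
rewrite size_map => hi hj ij _ _.
have l0 : I by case: (L) hi => [//|l0 _ _]; exact: l0.
rewrite !(nth_map l0) //.
by apply: inter_f; rewrite ?mem_nth ?nth_uniq.
Qed.

Lemma vertex_bound r N D : 3 <= r -> 0 < D ->
  N + r * (r * N * D) <= r * (r - 1) ^ 2 * D ^ 3 * N.
Proof.
move=> hr hD.
have sq : r + 1 <= (r - 1) ^ 2 by rewrite expnS expn1; nia.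
have cube : D <= D ^ 3 by rewrite !expnS expn0; nia.
have : r * (r + 1) * D <= r * (r - 1) ^ 2 * D ^ 3 by rewrite leq_mul // leq_mul.
have : 1 + r * r * D <= r * (r + 1) * D by nia.
nia.
Qed.

Section Construction.

Variables (r N D C : nat) (H : mhg 'I_N).
Hypotheses (r_ge3 : 3 <= r) (N_gt0 : 0 < N) (D_gt0 : 0 < D) (C_gt0 : 0 < C).
Hypotheses (H_lin : linear_mhg H) (H_deg : forall v, deg H v <= D)
  (H_size : forall e, e \in H -> #|e| <= r).

Lemma r_gt0 : 0 < r.
Proof. by lia. Qed.

Definition need (v : 'I_N) : nat := (D - C) - deg H v.

Definition extra : mhg 'I_N :=
  flatten [seq nseq (need v) [set v] | v <- enum 'I_N].

(* H completed by singleton edges; this is the trace of the final hypergraph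
   on the original vertices. *)
Definition Hplus : mhg 'I_N := H ++ extra.

Lemma extra_singletons e : e \in extra -> #|e| = 1.
Proof.
by case/flattenP => _ /mapP[v _ ->]; rewrite mem_nseq => /andP[_ /eqP ->]; rewrite cards1.
Qed.

(* The completion lifts every degree to max (deg H v) (D - C). *)
Lemma deg_Hplus v : deg Hplus v = deg H v + need v.
Proof.
rewrite /deg count_cat; congr (_ + _).
rewrite /extra count_flatten -map_comp sumnE big_map.
rewrite (bigD1_seq v) ?mem_enum ?enum_uniq //= count_nseq inE eqxx mul1n.
rewrite big1_seq ?addn0 // => w /andP[wv _] /=.
by rewrite count_nseq inE eq_sym (negbTE wv).
Qed.

Lemma deg_Hplus_le v : deg Hplus v <= D.
Proof. by rewrite deg_Hplus /need; have := H_deg v; lia. Qed.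

Lemma Hplus_lin : linear_mhg Hplus.
Proof. exact: linear_mhg_cat_singletons H_lin extra_singletons. Qed.

(* By double counting the completion has at most N * D edges; this decides
   how many private groups must fit in column 0. *)
Lemma size_Hplus : size Hplus <= N * D.
Proof. by have := size_le_deg (proj1 Hplus_lin) deg_Hplus_le; rewrite card_ord. Qed.

Local Notation edge_of j := (nth set0 Hplus j).

Lemma card_edge_of j : j < size Hplus -> 0 < #|edge_of j| <= r.
Proof.
move=> hj; have ej := mem_nth set0 hj.
rewrite card_gt0 (proj1 Hplus_lin) //=; move: ej; rewrite mem_cat.
by case/orP => [/H_size // | /extra_singletons ->]; lia.
Qed.

(* Fresh vertices: the grid point (i, y), i < r, y < p, is vertex N + i p + y.
   The vertex count M is written in the form n.+1 so that inord is available. *)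
Definition p : nat := r * N * D.
Local Notation M := (N + r * p).-1.+1.

Lemma p_gt0 : 0 < p.
Proof. by rewrite /p; nia. Qed.

Lemma M_eq : M = N + r * p.
Proof. by rewrite prednK // addn_gt0 N_gt0. Qed.

Lemma leNM : N <= M.
Proof. by rewrite M_eq leq_addr. Qed.

Definition old (v : 'I_N) : 'I_M := widen_ord leNM v.

Lemma old_inj : injective old.
Proof. by move=> x y e; apply: ord_inj; exact: (congr1 (@nat_of_ord _) e). Qed.

Definition pt (i y : nat) : 'I_M := inord (N + (i * p + y)).

Lemma pt_val i y : i < r -> y < p -> nat_of_ord (pt i y) = N + (i * p + y).
Proof. by move=> hi hy; rewrite inordK // M_eq; nia. Qed.

Lemma pt_inj i y i' y' : i < r -> i' < r -> y < p -> y' < p ->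
  pt i y = pt i' y' -> i = i' /\ y = y'.
Proof.
move=> hi hi' hy hy' /(congr1 (@nat_of_ord _)); rewrite !pt_val // => e.
by apply: divmod_inj hy hy' _; lia.
Qed.

Lemma old_neq_pt v i y : i < r -> y < p -> old v != pt i y.
Proof.
move=> hi hy; apply/eqP => /(congr1 (@nat_of_ord _)); rewrite pt_val // /old /=.
by have := ltn_ord v; lia.
Qed.

Lemma pt_cover (u : 'I_M) : N <= u -> exists i y, [/\ i < r, y < p & u = pt i y].
Proof.
move=> hu; have hx : u - N < r * p by have := ltn_ord u; have := M_eq; lia.
have hi : (u - N) %/ p < r by rewrite ltn_divLR ?p_gt0 // mulnC.
have hy := ltn_pmod (u - N) p_gt0.
exists ((u - N) %/ p), ((u - N) %% p); split => //.
by apply: ord_inj; rewrite pt_val // -divn_eq; lia.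
Qed.

Definition grp (j s : nat) : {set 'I_M} := [set pt 0 (j * (r - 1) + k) | k : 'I_s].

(* All private groups fit in column 0, as there are at most N * D of them. *)
Lemma grp_coord_lt j k : j < size Hplus -> k < r - 1 -> j * (r - 1) + k < p.
Proof. by move=> hj hk; have := size_Hplus; rewrite /p; nia. Qed.

Lemma old_notin_grp v j s : j < size Hplus -> s <= r - 1 -> old v \notin grp j s.
Proof.
move=> hj hs; apply/imsetP => -[k _ e].
have hk := grp_coord_lt hj (leq_trans (ltn_ord k) hs).
by have := old_neq_pt v r_gt0 hk; rewrite e eqxx.
Qed.

Lemma card_grp j s : j < size Hplus -> s <= r - 1 -> #|grp j s| = s.
Proof.
move=> hj hs; rewrite card_imset ?card_ord // => k k' e; apply: ord_inj.
have lt (l : 'I_s) := grp_coord_lt hj (leq_trans (ltn_ord l) hs).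
by have [_] := pt_inj r_gt0 r_gt0 (lt k) (lt k') e; lia.
Qed.

Lemma grp_disj j j' s s' u : j < size Hplus -> j' < size Hplus ->
  s <= r - 1 -> s' <= r - 1 -> u \in grp j s -> u \in grp j' s' -> j = j'.
Proof.
move=> hj hj' hs hs' /imsetP[k _ ->] /imsetP[k' _].
have hk := leq_trans (ltn_ord k) hs; have hk' := leq_trans (ltn_ord k') hs'.
case/(pt_inj r_gt0 r_gt0 (grp_coord_lt hj hk) (grp_coord_lt hj' hk')) => _.
by case/(divmod_inj hk hk').
Qed.

Definition pad (j : nat) : {set 'I_M} :=
  old @: edge_of j :|: grp j (r - #|edge_of j|).

(* Since edges are nonempty, a private group has at most r - 1 vertices. *)
Lemma pad_grp_size j : j < size Hplus -> r - #|edge_of j| <= r - 1.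
Proof. by move=> hj; apply: leq_sub2l; have /andP[] := card_edge_of hj. Qed.

Lemma card_pad j : j < size Hplus -> #|pad j| = r.
Proof.
move=> hj; have /andP[_ e_le] := card_edge_of hj; have hs := pad_grp_size hj.
rewrite cardsU (card_imset _ old_inj) card_grp //.
have -> : old @: edge_of j :&: grp j (r - #|edge_of j|) = set0.
  apply/setP => u; rewrite !inE; apply/negP => /andP[/imsetP[v _ ->]].
  exact/negP/old_notin_grp.
by rewrite cards0 subn0 subnKC.
Qed.

Lemma mem_pad_old j v : j < size Hplus -> (old v \in pad j) = (v \in edge_of j).
Proof.
move=> hj; rewrite in_setU (mem_imset _ _ old_inj).
by rewrite (negbTE (old_notin_grp _ hj (pad_grp_size hj))) orbF.
Qed.

Lemma pre_pad j : j < size Hplus -> old @^-1: pad j = edge_of j.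
Proof. by move=> hj; apply/setP => v; rewrite -mem_pad_old //; exact: in_set. Qed.

Lemma pad_fresh j u : u \in pad j -> N <= u -> u \in grp j (r - #|edge_of j|).
Proof.
rewrite in_setU => /orP[/imsetP[v _ ->] | //].
by rewrite /old /= leqNgt ltn_ord.
Qed.

(* Distinct padded edges meet only in original vertices, hence at most once. *)
Lemma pad_pad_inter j j' : j < size Hplus -> j' < size Hplus -> j != j' ->
  #|pad j :&: pad j'| <= 1.
Proof.
move=> hj hj' ne.
have sub : pad j :&: pad j' \subset old @: (edge_of j :&: edge_of j').
  apply/subsetP => u; rewrite in_setI => /andP[uj uj'].
  case: (ltnP u N) => hu; last first.
    have ejj := grp_disj hj hj' (pad_grp_size hj) (pad_grp_size hj')
      (pad_fresh uj hu) (pad_fresh uj' hu).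
    by rewrite ejj eqxx in ne.
  have ev : u = old (Ordinal hu) by apply: ord_inj.
  rewrite ev in uj uj' *.
  by rewrite (mem_imset _ _ old_inj) inE -(mem_pad_old _ hj) -(mem_pad_old _ hj') uj uj'.
apply: leq_trans (subset_leq_card sub) _; apply: leq_trans (leq_imset_card _ _) _.
exact: linear_mhg_inter Hplus_lin hj hj' ne.
Qed.

Definition line (s b : nat) : {set 'I_M} := [set pt i ((b + s * i) %% p) | i : 'I_r].

Lemma pt_in_line s b i y : i < r -> y < p ->
  (pt i y \in line s b) = ((b + s * i) %% p == y).
Proof.
move=> hi hy; apply/imsetP/eqP => [[i' _ e] | <-]; last by exists (Ordinal hi).
have [ii' ->] := pt_inj hi (ltn_ord i') hy (ltn_pmod _ p_gt0) e.
by rewrite ii'.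
Qed.

Lemma card_line s b : #|line s b| = r.
Proof.
rewrite card_imset ?card_ord // => i i' /pt_inj.
by case/(_ (ltn_ord i) (ltn_ord i') (ltn_pmod _ p_gt0) (ltn_pmod _ p_gt0)) => /ord_inj.
Qed.

Lemma old_notin_line v s b : old v \notin line s b.
Proof.
apply/imsetP => -[i _ e].
by have := old_neq_pt v (ltn_ord i) (ltn_pmod (b + s * i) p_gt0); rewrite e eqxx.
Qed.

Lemma pre_line s b : old @^-1: line s b = set0.
Proof. by apply/setP => v; rewrite in_set0 {1}in_set (negbTE (old_notin_line v s b)). Qed.

Lemma slope_lt_p t d : t < D.-1 -> d < r -> t * d < p.
Proof.
move=> ht hd; have td : t * d <= t * r by rewrite leq_mul2l ltnW ?orbT.
have tr : t * r < D * r by rewrite ltn_mul2r; apply/andP; split; lia.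
by rewrite /p; nia.
Qed.

Lemma line_line_inter s b s' b' : s < D.-1 -> s' < D.-1 -> b < p -> b' < p ->
  (s, b) != (s', b') -> #|line s b :&: line s' b'| <= 1.
Proof.
move=> hs hs' hb hb' ne; apply/card_le1_eqP => x y.
have common z : z \in line s b :&: line s' b' -> exists i : 'I_r,
    z = pt i ((b + s * i) %% p) /\ (b + s * i) %% p = (b' + s' * i) %% p.
  rewrite in_setI => /andP[/imsetP[i _ ->] /imsetP[i' _ e]]; exists i; split => //.
  have [ii' ->] := pt_inj (ltn_ord i) (ltn_ord i') (ltn_pmod _ p_gt0) (ltn_pmod _ p_gt0) e.
  by rewrite ii'.
have agree i j : i < j -> j < r -> (b + s * i) %% p = (b' + s' * i) %% p ->
    (b + s * j) %% p = (b' + s' * j) %% p -> False.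
  move=> ij jr ei ej; have d_lt : j - i < r by lia.
  have [es eb] := mod_line_inj hb hb' ij (slope_lt_p hs d_lt) (slope_lt_p hs' d_lt) ei ej.
  by move: ne; rewrite es eb eqxx.
move=> /common[i [-> ei]] /common[j [-> ej]].
case: (ltngtP i j) => [ij | ji | /ord_inj -> //].
  by case: (agree _ _ ij (ltn_ord j) ei ej).
by case: (agree _ _ ji (ltn_ord i) ej ei).
Qed.

(* A padded edge lives in column 0, which a line meets only once. *)
Lemma pad_line_inter j s b : j < size Hplus -> #|pad j :&: line s b| <= 1.
Proof.
move=> hj; apply/card_le1_eqP; suff col0 z : z \in pad j :&: line s b -> z = pt 0 (b %% p).
  by move=> x y /col0 -> /col0 ->.
rewrite in_setI => /andP[zj /imsetP[i _ ez]].
have hz : N <= z by rewrite ez pt_val ?ltn_pmod ?p_gt0 // leq_addr.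
case/imsetP: (pad_fresh zj hz) => k _ ek.
have hk := grp_coord_lt hj (leq_trans (ltn_ord k) (pad_grp_size hj)).
have [i0 _] := pt_inj (ltn_ord i) r_gt0 (ltn_pmod _ p_gt0) hk (etrans (esym ez) ek).
by rewrite ez i0 muln0 addn0.
Qed.

Definition lines : seq (nat * nat) := [seq (s, b) | s <- iota 0 D.-1, b <- iota 0 p].

Lemma mem_lines sb : sb \in lines -> sb.1 < D.-1 /\ sb.2 < p.
Proof. by case/allpairsP => -[s b] [/=]; rewrite !mem_iota => /andP[_ ?] /andP[_ ?] ->. Qed.

Lemma count_lines_through i y : i < r -> y < p ->
  count (fun sb : nat * nat => pt i y \in line sb.1 sb.2) lines = D.-1.
Proof.
move=> hi hy; rewrite /lines count_flatten -map_comp.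
rewrite (eq_map (g := fun=> 1)) ?sumnE ?big_map ?sum1_size ?size_iota // => s /=.
rewrite count_map (@eq_count _ _ (fun b => (b + s * i) %% p == y)) ?count_shift //.
by move=> b /=; rewrite pt_in_line.
Qed.

Definition label := (nat + nat * nat)%type.

Definition labels : seq label := map inl (iota 0 (size Hplus)) ++ map inr lines.

Definition edge (l : label) : {set 'I_M} :=
  match l with inl j => pad j | inr sb => line sb.1 sb.2 end.

Definition Hu : mhg 'I_M := map edge labels.

Lemma labels_uniq : uniq labels.
Proof.
rewrite cat_uniq !map_inj_uniq ?iota_uniq; last by move=> x y [].
  rewrite allpairs_uniq ?iota_uniq ?andbT //=; last by move=> [? ?] [? ?] _ _ [-> ->].
  by apply/hasPn => _ /mapP[sb _ ->]; apply/mapP => -[].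
by move=> x y [].
Qed.

Lemma Hu_linear : linear_hg Hu /\ uniform r Hu.
Proof.
have idx j : j \in iota 0 (size Hplus) -> j < size Hplus by rewrite mem_iota; lia.
apply: linear_hg_map labels_uniq _ _; first by lia.
  move=> l; rewrite mem_cat => /orP[/mapP[j /idx hj ->] | /mapP[sb _ ->]] /=.
    exact: card_pad.
  exact: card_line.
move=> l l'; rewrite !mem_cat.
case/orP => /mapP[a ha ->]; case/orP => /mapP[a' ha' ->] ne /=.
- by apply: pad_pad_inter (idx _ ha) (idx _ ha') _; apply: contraNneq ne => ->.
- exact: pad_line_inter (idx _ ha).
- by rewrite setIC; apply: pad_line_inter (idx _ ha').
have [hs hb] := mem_lines ha; have [hs' hb'] := mem_lines ha'.
by apply: line_line_inter => //; apply: contraNneq ne => ->.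
Qed.

Lemma deg_Hu u : deg Hu u = count (fun j => u \in pad j) (iota 0 (size Hplus))
  + count (fun sb : nat * nat => u \in line sb.1 sb.2) lines.
Proof. by rewrite /deg /Hu count_map count_cat !count_map. Qed.

Lemma restr_Hu : restr old Hu = Hplus.
Proof.
rewrite /restr /Hu map_cat filter_cat map_cat -!map_comp.
have -> : [seq e : {set _} <- [seq (edge \o inr) sb | sb <- lines] | old @^-1: e != set0] = [::].
  rewrite (@eq_in_filter _ _ pred0) ?filter_pred0 // => _ /mapP[sb _ ->] /=.
  by rewrite pre_line eqxx.
rewrite cats0 (@eq_in_filter _ _ predT) ?filter_predT; last first.
  move=> _ /mapP[j hj ->] /=; rewrite mem_iota /= in hj.
  by rewrite pre_pad // -card_gt0; have /andP[] := card_edge_of hj.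
rewrite -map_comp -[RHS](mkseq_nth set0); apply/eq_in_map => j /=.
by rewrite mem_iota => /= hj; rewrite pre_pad.
Qed.

(* Original vertices are on no line, so their degree is that in Hplus. *)
Lemma deg_Hu_old v : deg Hu (old v) = deg H v + need v.
Proof.
rewrite deg_Hu [X in _ + X](@eq_count _ _ pred0) ?count_pred0 ?addn0; last first.
  by move=> sb /=; rewrite (negbTE (old_notin_line _ _ _)).
rewrite -deg_Hplus /deg -[in RHS](mkseq_nth set0 Hplus) count_map.
by apply/eq_in_count => j; rewrite mem_iota => /= hj; rewrite mem_pad_old.
Qed.

(* A fresh vertex is on D - 1 lines and in at most one padded edge. *)
Lemma deg_Hu_fresh (u : 'I_M) : N <= u -> D.-1 <= deg Hu u <= D.
Proof.
move=> hu; have [i [y [hi hy eu]]] := pt_cover hu.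
have pads : count (fun j => u \in pad j) (iota 0 (size Hplus)) <= 1.
  apply: count_le1 (iota_uniq _ _) _ => j j'; rewrite !mem_iota /= => hj hj' uj uj'.
  exact: grp_disj hj hj' (pad_grp_size hj) (pad_grp_size hj') (pad_fresh uj hu) (pad_fresh uj' hu).
rewrite deg_Hu eu count_lines_through // -eu leq_addl /=.
by apply: leq_trans (leq_add pads (leqnn _)) _; rewrite add1n prednK.
Qed.

Lemma uniformization :
  exists (M' : nat) (leNM' : N <= M') (Hu' : mhg 'I_M'),
    [/\ linear_hg Hu' /\ uniform r Hu',
        (exists X : mhg 'I_N,
            perm_eq (restr (widen_ord leNM') Hu') (H ++ X) /\
            (forall e, e \in X -> #|e| = 1)),
        (forall v : 'I_M', D - C <= deg Hu' v <= D),
        (forall v : 'I_N, D - C <= deg H v -> deg Hu' (widen_ord leNM' v) = deg H v)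
      & M' <= r * (r - 1) ^ 2 * D ^ 3 * N].
Proof.
exists M, leNM, Hu; split.
- exact: Hu_linear.
- by exists extra; split; [rewrite restr_Hu | exact: extra_singletons].
- move=> u; case: (ltnP u N) => hu; last by have := deg_Hu_fresh hu; lia.
  have -> : u = old (Ordinal hu) by apply: ord_inj.
  by rewrite deg_Hu_old /need; have := H_deg (Ordinal hu); lia.
- by move=> v hv; rewrite deg_Hu_old /need; lia.
- by rewrite M_eq /p; exact: vertex_bound.
Qed.

End Construction.

Theorem lemma4p4 :
  forall r : nat, 3 <= r ->
  exists N0 D0 C0 : nat,
  forall (N C D : nat), N0 <= N -> C0 <= C -> D0 <= D ->
  forall H : mhg 'I_N,
    linear_mhg H ->
    (forall v : 'I_N, deg H v <= D) ->
    (forall e, e \in H -> #|e| <= r) ->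
  exists (M : nat) (leNM : N <= M) (Hu : mhg 'I_M),
    [/\ linear_hg Hu /\ uniform r Hu,
        (* (1) Hu|_{V(H)} = H + (a multiset of singleton edges) *)
        (exists extra : mhg 'I_N,
            perm_eq (restr (widen_ord leNM) Hu) (H ++ extra) /\
            (forall e, e \in extra -> #|e| = 1)),
        (* (2) *)
        (forall v : 'I_M, D - C <= deg Hu v <= D),
        (forall v : 'I_N, D - C <= deg H v ->
            deg Hu (widen_ord leNM v) = deg H v)
      & (* (3) *)
        M <= r * (r - 1) ^ 2 * D ^ 3 * N].
Proof.
move=> r r_ge3; exists 1, 1, 1 => N C D N_gt0 C_gt0 D_gt0 H H_lin H_deg H_size.
exact: uniformization.
Qed.
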